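(* Let $q_1,q_2,q_3,q_4$ satisfy $q_1q_2q_3q_4=1$, let $x$ be a further variable, and let $\rho$ be a finite solid partition. For $k\ge1$ let $\Pi^{(k)}=\{(i,j,l):(i,j,l,k)\in\rho\}$ and $$\boldsymbol{\Pi}^{(k)}=\sum_{(i,j,l)\in\Pi^{(k)}}x\,q_4^{k-1}q_1^{i-1}q_2^{j-1}q_3^{l-1}.$$ Define $$s(\Pi)=\Big[\sum_{i<j}\mathbf P_{123}\,\boldsymbol{\Pi}^{(i)\vee}\boldsymbol{\Pi}^{(j)}\Big]^{(0)}.$$ Then $s(\Pi)\equiv\sigma_4(\rho)\pmod 2$, where $\sigma_4(\rho)=\#\{(i,i,i,j)\in\rho:\ i<j\}$; in particular $(-1)^{s(\Pi)}=(-1)^{\sigma_4(\rho)}$.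
   Context: A finite solid partition is a finite set $\rho\subset\mathbb Z_{\ge1}^4$ such that if $(i_1,\dots,i_4)\in\rho$ and $1\le i'_a\le i_a$ for all $a$ then $(i'_1,\dots,i'_4)\in\rho$. Characters are finite $\mathbb Z$-combinations of Laurent monomials; $\mathbf X^\vee$ replaces each monomial $m$ by $m^{-1}$. $\mathbf P_{123}=(1-q_1)(1-q_2)(1-q_3)$. For a character $\mathbf X$, after substituting $q_4=(q_1q_2q_3)^{-1}$ (the variable $x$ cancels in $\boldsymbol\Pi^{(i)\vee}\boldsymbol\Pi^{(j)}$), $[\mathbf X]^{(0)}\in\mathbb Z$ denotes its unmovable part, i.e. the coefficient of the constant monomial $1$ in the resulting Laurent polynomial in $q_1,q_2,q_3$. *)

From HB Require Import structures.
From mathcomp Require Import all_boot all_order all_algebra.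
From mathcomp Require Import finmap.
Set Implicit Arguments. Unset Strict Implicit. Unset Printing Implicit Defensive.
Import Order.TTheory GRing.Theory Num.Theory.
Local Open Scope ring_scope.


Definition box := (nat * nat * nat * nat)%type.
Definition b1 (b : box) : nat := b.1.1.1.
Definition b2 (b : box) : nat := b.1.1.2.
Definition b3 (b : box) : nat := b.1.2.
Definition b4 (b : box) : nat := b.2.

Definition solid_partition (rho : {fset box}) : Prop :=
  (forall b, b \in rho -> [/\ (1 <= b1 b)%N, (1 <= b2 b)%N, (1 <= b3 b)%N & (1 <= b4 b)%N])
  /\ (forall b c, b \in rho ->
        [/\ (1 <= b1 c <= b1 b)%N, (1 <= b2 c <= b2 b)%N,
            (1 <= b3 c <= b3 b)%N & (1 <= b4 c <= b4 b)%N] -> c \in rho).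

(* Laurent monomial x^e0 q1^e1 q2^e2 q3^e3 q4^e4, as its exponent vector. *)
Definition mono := (int * int * int * int * int)%type.
Definition mono_mul (m n : mono) : mono :=
  (m.1.1.1.1 + n.1.1.1.1, m.1.1.1.2 + n.1.1.1.2, m.1.1.2 + n.1.1.2,
   m.1.2 + n.1.2, m.2 + n.2).
Definition mono_inv (m : mono) : mono :=
  (- m.1.1.1.1, - m.1.1.1.2, - m.1.1.2, - m.1.2, - m.2).
Definition mono1 : mono := (0, 0, 0, 0, 0).

(* A character: finite Z-combination of Laurent monomials, as a formal sum. *)
Definition character := seq (int * mono).
Definition ch_add (X Y : character) : character := X ++ Y.
Definition ch_mul (X Y : character) : character :=
  [seq (a.1 * b.1, mono_mul a.2 b.2) | a <- X, b <- Y].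
Definition ch_dual (X : character) : character :=
  [seq (a.1, mono_inv a.2) | a <- X].

(* Exponents of (x, q1, q2, q3) after substituting q4 = (q1 q2 q3)^{-1}. *)
Definition subst_q4 (m : mono) : int * int * int * int :=
  (m.1.1.1.1, m.1.1.1.2 - m.2, m.1.1.2 - m.2, m.1.2 - m.2).

(* Unmovable part [X]^(0): coefficient of the constant monomial 1 after
   the substitution q4 = (q1 q2 q3)^{-1}. *)
Definition unmovable (X : character) : int :=
  \sum_(a <- X | subst_q4 a.2 == (0, 0, 0, 0)) a.1.

Definition q1m : mono := (0, 1, 0, 0, 0).
Definition q2m : mono := (0, 0, 1, 0, 0).
Definition q3m : mono := (0, 0, 0, 1, 0).

Definition P123 : character :=
  ch_mul [:: (1, mono1); (-1, q1m)]
    (ch_mul [:: (1, mono1); (-1, q2m)] [:: (1, mono1); (-1, q3m)]).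

Definition box_mono (b : box) : mono :=
  (1, (b1 b)%:Z - 1, (b2 b)%:Z - 1, (b3 b)%:Z - 1, (b4 b)%:Z - 1).
Definition bPi (rho : {fset box}) (k : nat) : character :=
  [seq (1, box_mono b) | b <- rho & b4 b == k].

Definition layer_bound (rho : {fset box}) : nat := (\max_(b <- rho) b4 b).+1.

(* s(Pi) = [ sum_{i<j} P123 Pi^(i)v Pi^(j) ]^(0)  (empty layers contribute 0). *)
Definition s_Pi (rho : {fset box}) : int :=
  unmovable (\big[ch_add/[::]]_(1 <= j < layer_bound rho)
               \big[ch_add/[::]]_(1 <= i < j)
                 ch_mul P123 (ch_mul (ch_dual (bPi rho i)) (bPi rho j))).

Definition sigma4 (rho : {fset box}) : nat :=
  #|` [fset b in rho | (b1 b == b2 b) && (b2 b == b3 b) && (b1 b < b4 b)%N]%fset|%fset.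

From mathcomp Require Import all_boot all_order all_algebra.
From mathcomp Require Import finmap.
From mathcomp Require Import zify ring.
Import GRing.Theory.
Local Open Scope ring_scope.

(* Expanding the products, s(Pi) is a signed count of triples (a, b, p) with
   boxes a, b of rho in layers i < j and p in {0,1}^3 (the monomial q^p of
   P_123, with sign (-1)^|p|) such that a = b + p - d(1,1,1,1), where d = j - i.
   Fix b and d in [1, b4 b).  By downward closure the box b + p - d(1,1,1,1)
   lies in rho as soon as its coordinates are positive, so the sum over p is
   the product over k = 1,2,3 of [d < b_k] - [d < b_k + 1] = -[d = b_k].  Only
   d = b1 = b2 = b3 < b4 survives, hence s(Pi) = - sigma_4(rho) exactly. *)

Definition unmovable_mono (m : mono) : bool := subst_q4 m == (0, 0, 0, 0).

Lemma unmovable_nil : unmovable [::] = 0.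
Proof. by rewrite /unmovable big_nil. Qed.

Lemma unmovable_add X Y : unmovable (ch_add X Y) = unmovable X + unmovable Y.
Proof. by rewrite /unmovable /ch_add big_cat. Qed.

Lemma unmovable_big (I : Type) (r : seq I) (P : pred I) (F : I -> character) :
  unmovable (\big[ch_add/[::]]_(i <- r | P i) F i) =
  \sum_(i <- r | P i) unmovable (F i).
Proof. exact: (big_morph unmovable unmovable_add unmovable_nil). Qed.

Lemma unmovable_mul X Y :
  unmovable (ch_mul X Y) =
  \sum_(a <- X) \sum_(b <- Y)
     (if unmovable_mono (mono_mul a.2 b.2) then a.1 * b.1 else 0).
Proof. by rewrite /unmovable big_mkcond /ch_mul big_allpairs_dep. Qed.

Definition pair_coef (p : int * mono) (a b : box) : int :=
  if unmovable_mono (mono_mul p.2 (mono_mul (mono_inv (box_mono a)) (box_mono b)))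
  then p.1 else 0.

Lemma unmovable_layer_pair rho i j :
  unmovable (ch_mul P123 (ch_mul (ch_dual (bPi rho i)) (bPi rho j))) =
  \sum_(p <- P123) \sum_(a <- rho | b4 a == i) \sum_(b <- rho | b4 b == j)
     pair_coef p a b.
Proof.
rewrite unmovable_mul; apply: eq_bigr => p _.
rewrite /ch_mul big_allpairs_dep /ch_dual /bPi !big_map big_filter.
by apply: eq_bigr => a _; rewrite big_map big_filter; under eq_bigr do rewrite !mulr1.
Qed.

Lemma big_pred1_uniq (R : nmodType) (I : eqType) (r : seq I) (x : I) (F : I -> R) :
  uniq r -> \sum_(i <- r | i == x) F i = if x \in r then F x else 0.
Proof.
move=> r_uniq; case: ifP => xr.
  by rewrite -big_filter filter_pred1_uniq // big_seq1.
by rewrite big1_seq // => i /andP[/eqP -> ix]; rewrite ix in xr.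
Qed.

Lemma big_layers (R : nmodType) (I : Type) (r : seq I) (f : I -> nat) (lo hi : nat)
    (G : I -> R) :
  \sum_(lo <= k < hi) \sum_(a <- r | f a == k) G a =
  \sum_(a <- r | (lo <= f a < hi)%N) G a.
Proof.
under eq_bigr do rewrite big_mkcond.
rewrite exchange_big [RHS]big_mkcond; apply: eq_bigr => a _.
rewrite -big_mkcond /=; under eq_bigl do rewrite eq_sym.
by rewrite big_pred1_uniq ?iota_uniq // mem_index_iota.
Qed.

Lemma P123E : P123 =
  [:: (1, (0, 0%N%:Z, 0%N%:Z, 0%N%:Z, 0)); (-1, (0, 0%N%:Z, 0%N%:Z, 1%N%:Z, 0));
      (-1, (0, 0%N%:Z, 1%N%:Z, 0%N%:Z, 0)); (1, (0, 0%N%:Z, 1%N%:Z, 1%N%:Z, 0));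
      (-1, (0, 1%N%:Z, 0%N%:Z, 0%N%:Z, 0)); (1, (0, 1%N%:Z, 0%N%:Z, 1%N%:Z, 0));
      (1, (0, 1%N%:Z, 1%N%:Z, 0%N%:Z, 0)); (-1, (0, 1%N%:Z, 1%N%:Z, 1%N%:Z, 0))].
Proof. by vm_compute. Qed.

Definition diag_shift (b : box) (p1 p2 p3 d : nat) : box :=
  (b1 b + p1 - d, b2 b + p2 - d, b3 b + p3 - d, b4 b - d)%N.

Definition diag_shift_pos (b : box) (p1 p2 p3 d : nat) : bool :=
  [&& d < b1 b + p1, d < b2 b + p2 & d < b3 b + p3]%N.

Lemma pair_coefE (c : int) (p1 p2 p3 : nat) (a b : box) :
  (0 < b1 a)%N -> (0 < b2 a)%N -> (0 < b3 a)%N -> (b4 a <= b4 b)%N ->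
  let d := (b4 b - b4 a)%N in
  pair_coef (c, (0, p1%:Z, p2%:Z, p3%:Z, 0)) a b =
  if (a == diag_shift b p1 p2 p3 d) && diag_shift_pos b p1 p2 p3 d then c else 0.
Proof.
case: a b => [[[a1 a2] a3] a4] [[[c1 c2] c3] c4].
rewrite /pair_coef /unmovable_mono /subst_q4 /mono_mul /mono_inv /box_mono.
rewrite /diag_shift /diag_shift_pos /b1 /b2 /b3 /b4 /= => *.
by congr (if _ then _ else _); rewrite !xpair_eqE; lia.
Qed.

Lemma pair_coef_lower_layer (c : int) (p1 p2 p3 : nat) (a b : box) :
  (0 < b1 a)%N -> (0 < b2 a)%N -> (0 < b3 a)%N ->
  (if (1 <= b4 a < b4 b)%N then pair_coef (c, (0, p1%:Z, p2%:Z, p3%:Z, 0)) a b else 0) =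
  \sum_(1 <= d < b4 b | a == diag_shift b p1 p2 p3 d)
     (if diag_shift_pos b p1 p2 p3 d then c else 0).
Proof.
move=> a1 a2 a3; case: ifP => layer_a.
  rewrite pair_coefE //; last by lia.
  have gap_range : (b4 b - b4 a)%N \in index_iota 1 (b4 b) by rewrite mem_index_iota; lia.
  rewrite big_mkcond (bigD1_seq _ gap_range) ?iota_uniq //=.
  rewrite big1_seq ?addr0; first by case: (a == _).
  move=> d /andP[d_ne]; rewrite mem_index_iota => d_range; case: eqP => // a_shift.
  by move: d_ne d_range; rewrite a_shift /diag_shift /b4 /=; lia.
rewrite big1_seq // => d /andP[/eqP a_shift]; rewrite mem_index_iota => d_range.
by move: layer_a d_range; rewrite a_shift /diag_shift /b4 /=; lia.
Qed.

Lemma diag_shift_pos_alternating (b : box) (d : nat) :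
  (if diag_shift_pos b 0 0 0 d then 1 else 0) +
  ((if diag_shift_pos b 0 0 1 d then -1 else 0) +
   ((if diag_shift_pos b 0 1 0 d then -1 else 0) +
    ((if diag_shift_pos b 0 1 1 d then 1 else 0) +
     ((if diag_shift_pos b 1 0 0 d then -1 else 0) +
      ((if diag_shift_pos b 1 0 1 d then 1 else 0) +
       ((if diag_shift_pos b 1 1 0 d then 1 else 0) +
        (if diag_shift_pos b 1 1 1 d then -1 else 0))))))) =
  if [&& d == b1 b, d == b2 b & d == b3 b] then -1 else 0 :> int.
Proof.
rewrite /diag_shift_pos !addn0 !addn1 !ltnS.
by case: (ltngtP d (b1 b)); case: (ltngtP d (b2 b)); case: (ltngtP d (b3 b)).
Qed.

Lemma sum_count_opp (I : Type) (r : seq I) (P : pred I) :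
  \sum_(i <- r | P i) (-1 : int) = - (count P r)%:Z.
Proof. by rewrite big_const_seq iter_addr addr0 mulNrn natz. Qed.

Definition diag_box (b : box) : bool :=
  (b1 b == b2 b) && (b2 b == b3 b) && (b1 b < b4 b)%N.

Lemma sigma4_count (rho : {fset box}) : sigma4 rho = count diag_box rho.
Proof.
rewrite /sigma4 -size_filter; apply: perm_size.
apply: uniq_perm; [exact: fset_uniq | exact: filter_uniq (fset_uniq _) |].
by move=> b; rewrite mem_filter !inE andbC.
Qed.

Section LowerLayers.

Variable rho : {fset box}.
Hypothesis rho_solid : solid_partition rho.

Lemma sum_lower_layers_pair_coef (c : int) (p1 p2 p3 : nat) (b : box) :
  b \in rho -> (p1 <= 1)%N -> (p2 <= 1)%N -> (p3 <= 1)%N ->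
  \sum_(a <- rho | (1 <= b4 a < b4 b)%N) pair_coef (c, (0, p1%:Z, p2%:Z, p3%:Z, 0)) a b =
  \sum_(1 <= d < b4 b) (if diag_shift_pos b p1 p2 p3 d then c else 0).
Proof.
case: rho_solid => rho_pos rho_down b_rho p1_le1 p2_le1 p3_le1.
rewrite big_mkcond (eq_big_seq (fun a => \sum_(1 <= d < b4 b | a == diag_shift b p1 p2 p3 d)
    (if diag_shift_pos b p1 p2 p3 d then c else 0))); last first.
  by move=> a /rho_pos[? ? ? _]; apply: pair_coef_lower_layer.
under eq_bigr do rewrite big_mkcond.
rewrite exchange_big; apply: eq_big_nat => d d_range.
rewrite -big_mkcond /= big_pred1_uniq ?fset_uniq //.
have [pos_d|_] := boolP (diag_shift_pos b p1 p2 p3 d); last by case: ifP.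
rewrite ifT //; apply: (rho_down b _ b_rho).
move: (rho_pos b b_rho) pos_d d_range.
by rewrite /diag_shift_pos /diag_shift /b1 /b2 /b3 /b4 /= => -[? ? ? ?] ? ?; split; lia.
Qed.

Lemma sum_lower_layers_P123 (b : box) : b \in rho ->
  \sum_(a <- rho | (1 <= b4 a < b4 b)%N) \sum_(p <- P123) pair_coef p a b =
  if diag_box b then -1 else 0.
Proof.
move=> b_rho; rewrite exchange_big P123E !big_cons big_nil /= addr0.
rewrite !sum_lower_layers_pair_coef // -!big_split /=.
under eq_bigr do rewrite diag_shift_pos_alternating.
have [/andP[/eqP b12 /eqP b23] | not_diag] := boolP ((b1 b == b2 b) && (b2 b == b3 b)).
  under eq_bigr do rewrite -b23 -b12 !andbb.
  rewrite -big_mkcond /= big_pred1_uniq ?iota_uniq // mem_index_iota /diag_box b12 b23 !eqxx.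
  by have [b1_pos _ _ _] := rho_solid.1 b b_rho; rewrite -b23 -b12 b1_pos.
rewrite /diag_box (negbTE not_diag) big1 // => d _.
by case: ifP => // /and3P[/eqP d1 /eqP d2 /eqP d3]; rewrite -d1 -d2 -d3 !eqxx in not_diag.
Qed.

Lemma s_PiE :
  s_Pi rho = \sum_(b <- rho) \sum_(a <- rho | (1 <= b4 a < b4 b)%N)
                \sum_(p <- P123) pair_coef p a b.
Proof.
rewrite /s_Pi unmovable_big.
transitivity (\sum_(1 <= j < layer_bound rho) \sum_(a <- rho | (1 <= b4 a < j)%N)
                \sum_(b <- rho | b4 b == j) \sum_(p <- P123) pair_coef p a b).
  apply: eq_bigr => j _; rewrite unmovable_big -big_layers; apply: eq_bigr => i _.
  by rewrite unmovable_layer_pair exchange_big; apply: eq_bigr => a _; apply: exchange_big.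
transitivity (\sum_(b <- rho | (1 <= b4 b < layer_bound rho)%N)
                \sum_(a <- rho | (1 <= b4 a < b4 b)%N) \sum_(p <- P123) pair_coef p a b).
  rewrite -big_layers; apply: eq_bigr => j _.
  by rewrite exchange_big; apply: eq_bigr => b /eqP ->.
rewrite big_seq_cond [RHS]big_seq; apply: eq_bigl => b.
case b_rho: (b \in rho) => //=; have [_ _ _ ->] := rho_solid.1 b b_rho.
by rewrite /layer_bound ltnS (leq_bigmax_seq _ b_rho).
Qed.

Lemma s_Pi_opp_sigma4 : s_Pi rho = - (sigma4 rho)%:Z.
Proof.
rewrite s_PiE big_seq; under eq_bigr => b b_rho do rewrite sum_lower_layers_P123 //.
by rewrite -big_seq -big_mkcond sum_count_opp sigma4_count.
Qed.

End LowerLayers.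

Theorem proposition6p8 (rho : {fset box}) :
  solid_partition rho ->
  (s_Pi rho = (sigma4 rho)%:Z %[mod 2])%Z.
Proof.
move=> rho_solid; rewrite s_Pi_opp_sigma4 //.
have -> : - (sigma4 rho)%:Z = - (sigma4 rho)%:Z * 2 + (sigma4 rho)%:Z by ring.
exact: modzMDl.
Qed.
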